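(* Consider the pay-to-bid game with re-entry and its unique symmetric subgame perfect equilibrium, and let the seller's expected revenue be the sale price $s$ plus the expected total bid fees collected. Then: (I) If players are risk neutral ($u(x)=x$), the seller's expected revenue equals $v$. If players are risk-loving ($\rho<0$): (II) the seller's expected revenue equals $\frac{c\,u(v-s)}{u(c)}+s$; (III) it is independent of the number of players $n$; (IV) it is strictly greater than $v$; (V) it is strictly increasing in $v$, decreasing in $s$, decreasing in $c$, and decreasing in $\rho$ (i.e. larger when players are more risk-loving); (VI) its supremum over sale prices $s\ge 0$ and bid fees $0<c<v-s$ (for fixed $v$ and $\rho$) equals $u(v)=\frac{1-e^{-\rho v}}{\rho}$.
   Context: Pay-to-bid game: an object has monetary value $v>0$ that is common knowledge; there are $n\ge 2$ players; the bid fee is $c>0$ and the fixed sale price is $s\ge 0$, with $c<v-s$. Play proceeds in rounds $t=1,2,3,\dots$ with complete information. In each round every player simultaneously chooses an action in $\{\text{Bid},\text{No Bid}\}$. Each Bid costs $c$, paid immediately to the seller. If exactly one player bids in a round, she wins the object (value $v$), pays $s$ to the seller, and the game ends; if two or more bid, play continues; if none bids, the round is replayed. With re-entry, all $n$ players are active in every round regardless of history. Players do not discount; payoff is $u$(final wealth) with $u(x)=\frac{1-e^{-\rho x}}{\rho}$ for a constant $\rho<0$ (constant absolute risk-loving utility), or $u(x)=x$ in the risk-neutral case. In the unique symmetric subgame perfect equilibrium each player plays Bid in every round with probability $1-\left(u(c)/u(v-s)\right)^{1/(n-1)}$. *)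

From Stdlib Require Import Reals ClassicalEpsilon.
Open Scope R_scope.

Definition cara (rho x : R) : R := (1 - exp (- rho * x)) / rho.

Definition u_neutral (x : R) : R := x.

(* Equilibrium per-round bid probability of each player:
   1 - (u(c)/u(v-s))^(1/(n-1)). *)
Definition bid_prob (u : R -> R) (n : nat) (v s c : R) : R :=
  1 - Rpower (u c / u (v - s)) (/ INR (n - 1)).

(* Probability that exactly one of the n players bids in a round,
   when each bids independently with probability p (the game then ends). *)
Definition end_prob (n : nat) (p : R) : R := INR n * p * (1 - p) ^ (n - 1).

(* Probability that round t+1 is reached (t = 0 is the first round). *)
Definition reach_prob (n : nat) (p : R) (t : nat) : R := (1 - end_prob n p) ^ t.

Definition round_fee (n : nat) (p c : R) : R := INR n * p * c.

Definition fee_term (u : R -> R) (n : nat) (v s c : R) (t : nat) : R :=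
  let p := bid_prob u n v s c in reach_prob n p t * round_fee n p c.

(* Sum of a series (a chosen limit if it converges; arbitrary otherwise). *)
Definition series_sum (f : nat -> R) : R :=
  epsilon (inhabits 0) (fun l => infinite_sum f l).

Definition expected_fees (u : R -> R) (n : nat) (v s c : R) : R :=
  series_sum (fee_term u n v s c).

Definition revenue (u : R -> R) (n : nat) (v s c : R) : R :=
  s + expected_fees u n v s c.

From Stdlib Require Import Reals Lra Lia ClassicalEpsilon.
From Coquelicot Require Import Coquelicot.
Open Scope R_scope.

(* Let q be the probability that a player abstains in a round.  A round ends
   the game with probability n (1-q) q^(n-1) and collects n (1-q) c in
   expected fees, so the expected-fee series is geometric with sum
   c / q^(n-1), for any utility.  In the equilibrium q^(n-1) = u(c)/u(v-s),
   hence the fees equal c u(v-s)/u(c) (lemma fees_closed_form); with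
   u(x) = x this gives (I), and for CARA utility it gives (II) and (III).

   For rho < 0 put a = -rho > 0, so u_a(x) = (e^(a x) - 1)/a and the fees are
   fee_ratio a c X = c (e^(a X) - 1)/(e^(a c) - 1) with X = v - s.  Items (IV),
   (V) and (VI) are monotonicity and approximation properties of fee_ratio
   (section FeeRatio), all obtained from the strict convexity of exp through
   the monotonicity of (e^y - 1)/y and (1 - e^(-y))/y; the dependence on a
   is treated by a derivative argument. *)

(* Bernoulli-type bound: with m+1 players abstaining with probability q,
   "exactly one bids" is no more likely than "someone bids". *)
Lemma exactly_one_le_someone (q : R) (m : nat) : 0 <= q <= 1 ->
  INR (S m) * (1 - q) * q ^ m <= 1 - q ^ S m.
Proof.
  intros Hq. induction m as [|m IH]; [simpl; lra|].
  rewrite (S_INR (S m)). cbn [pow] in *.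
  set (k := INR (S m)) in *. set (Q := q ^ m) in *.
  assert (HQ : 0 <= Q <= 1).
  { split; [apply pow_le; lra|]. rewrite <- (pow1 m). apply pow_incr. lra. }
  assert (q * (k * (1 - q) * Q) <= q * (1 - q * Q)) by (apply Rmult_le_compat_l; lra).
  assert (0 <= (1 - q) * (1 - q * Q)) by (apply Rmult_le_pos; nra).
  nra.
Qed.

Lemma end_prob_bounds (n : nat) (p : R) : (1 <= n)%nat -> 0 < p < 1 ->
  0 < end_prob n p < 1.
Proof.
  intros Hn Hp. unfold end_prob.
  assert (HnR : 0 < INR n) by (apply lt_0_INR; lia).
  assert (0 < (1 - p) ^ (n - 1)) by (apply pow_lt; lra).
  split; [apply Rmult_lt_0_compat; [nra | lra]|].
  destruct n as [|m]; [lia|]. replace (S m - 1)%nat with m by lia.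
  pose proof (exactly_one_le_someone (1 - p) m ltac:(lra)) as Hb.
  replace (1 - (1 - p)) with p in Hb by ring.
  assert (0 < (1 - p) ^ S m) by (apply pow_lt; lra). nra.
Qed.

(* The expected-fee series is geometric; its sum only depends on the
   probability (1-p)^(n-1) that all other players abstain. *)
Lemma fee_series (n : nat) (p c : R) : (1 <= n)%nat -> 0 < p < 1 ->
  infinite_sum (fun t => reach_prob n p t * round_fee n p c) (c / (1 - p) ^ (n - 1)).
Proof.
  intros Hn Hp. destruct (end_prob_bounds n p Hn Hp) as [He0 He1].
  assert (HnR : 0 < INR n) by (apply lt_0_INR; lia).
  assert (0 < (1 - p) ^ (n - 1)) by (apply pow_lt; lra).
  apply is_series_Reals.
  replace (c / (1 - p) ^ (n - 1)) with (/ (1 - (1 - end_prob n p)) * round_fee n p c).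
  - apply is_series_scal_r, is_series_geom. rewrite Rabs_right; lra.
  - unfold end_prob, round_fee. field. split; [lra|]. unfold end_prob in He0. lra.
Qed.

Lemma series_sum_eq (f : nat -> R) (l : R) : infinite_sum f l -> series_sum f = l.
Proof.
  intros Hl. unfold series_sum.
  apply (uniqueness_sum f); [apply epsilon_spec; eauto | exact Hl].
Qed.

Lemma root_spec (r : R) (k : nat) : 0 < r < 1 -> (1 <= k)%nat ->
  0 < Rpower r (/ INR k) < 1 /\ Rpower r (/ INR k) ^ k = r.
Proof.
  intros Hr Hk. assert (HkR : 0 < INR k) by (apply lt_0_INR; lia).
  split.
  - unfold Rpower. split; [apply exp_pos|]. rewrite <- exp_0. apply exp_increasing.
    assert (ln r < 0) by (rewrite <- ln_1; apply ln_increasing; lra).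
    assert (0 < / INR k) by (apply Rinv_0_lt_compat; lra). nra.
  - rewrite <- Rpower_pow by (unfold Rpower; apply exp_pos).
    rewrite Rpower_mult, Rinv_l by lra. apply Rpower_1; lra.
Qed.

Lemma fees_closed_form (u : R -> R) (n : nat) (v s c : R) :
  (2 <= n)%nat -> 0 < u c < u (v - s) ->
  infinite_sum (fee_term u n v s c) (c * u (v - s) / u c) /\
  revenue u n v s c = c * u (v - s) / u c + s.
Proof.
  intros Hn Hu.
  assert (Hr : 0 < u c / u (v - s) < 1).
  { split; [apply Rdiv_lt_0_compat; lra|].
    apply (Rmult_lt_reg_r (u (v - s))); [lra|]. field_simplify; lra. }
  destruct (root_spec (u c / u (v - s)) (n - 1) Hr ltac:(lia)) as [Hq Hqpow].
  set (q := Rpower (u c / u (v - s)) (/ INR (n - 1))) in Hq, Hqpow.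
  assert (Hbid : bid_prob u n v s c = 1 - q) by reflexivity.
  assert (Hsum : infinite_sum (fee_term u n v s c) (c * u (v - s) / u c)).
  { replace (c * u (v - s) / u c) with (c / (1 - bid_prob u n v s c) ^ (n - 1)).
    - apply fee_series; [lia | rewrite Hbid; lra].
    - rewrite Hbid. replace (1 - (1 - q)) with q by ring. rewrite Hqpow. field. lra. }
  split; [exact Hsum|].
  unfold revenue, expected_fees. rewrite (series_sum_eq _ _ Hsum). ring.
Qed.

Lemma exp_below_chord (x z y : R) : x < z < y ->
  (y - x) * exp z < (y - z) * exp x + (z - x) * exp y.
Proof.
  intros [Hxz Hzy].
  assert (Ex : exp x = exp z * exp (x - z)) by (rewrite <- exp_plus; f_equal; ring).
  assert (Ey : exp y = exp z * exp (y - z)) by (rewrite <- exp_plus; f_equal; ring).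
  pose proof (exp_ineq1 (x - z) ltac:(lra)) as Htx.
  pose proof (exp_ineq1 (y - z) ltac:(lra)) as Hty.
  pose proof (exp_pos z). rewrite Ex, Ey.
  assert ((y - z) * (1 + (x - z)) < (y - z) * exp (x - z)) by (apply Rmult_lt_compat_l; lra).
  assert ((z - x) * (1 + (y - z)) < (z - x) * exp (y - z)) by (apply Rmult_lt_compat_l; lra).
  nra.
Qed.

Lemma expm1_bounds (y : R) : 0 < y -> y < exp y - 1 < y * exp y.
Proof.
  intros Hy. pose proof (exp_ineq1 y ltac:(lra)). pose proof (exp_ineq1 (- y) ltac:(lra)).
  assert (exp y * exp (- y) = 1) by (rewrite <- exp_plus, Rplus_opp_r; apply exp_0).
  pose proof (exp_pos y). split; nra.
Qed.

Lemma expm1_pos (a x : R) : 0 < a -> 0 < x -> 0 < exp (a * x) - 1.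
Proof.
  intros Ha Hx. assert (Hax : 0 < a * x) by (apply Rmult_lt_0_compat; assumption).
  pose proof (expm1_bounds (a * x) Hax). lra.
Qed.

Lemma expm1_ratio_increasing (y1 y2 : R) : 0 < y1 < y2 ->
  (exp y1 - 1) * y2 < (exp y2 - 1) * y1.
Proof.
  intros Hy. pose proof (exp_below_chord 0 y1 y2 ltac:(lra)) as H.
  rewrite exp_0 in H. nra.
Qed.

(* (1 - e^(-y))/y is strictly decreasing on (0, oo); the statement is this
   fact multiplied by y1 y2 e^y1 e^y2. *)
Lemma expm1_cross (y1 y2 : R) : 0 < y1 < y2 ->
  y1 * exp y1 * (exp y2 - 1) < y2 * exp y2 * (exp y1 - 1).
Proof.
  intros Hy. pose proof (exp_below_chord (- y2) (- y1) 0 ltac:(lra)) as H.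
  rewrite exp_0, !exp_Ropp in H.
  pose proof (exp_pos y1). pose proof (exp_pos y2).
  assert (Hm : exp y1 * exp y2 * ((0 - - y2) * / exp y1)
             < exp y1 * exp y2 * ((0 - - y1) * / exp y2 + (- y1 - - y2) * 1))
    by (apply Rmult_lt_compat_l; nra).
  replace (exp y1 * exp y2 * ((0 - - y2) * / exp y1)) with (y2 * exp y2) in Hm by (field; lra).
  replace (exp y1 * exp y2 * ((0 - - y1) * / exp y2 + (- y1 - - y2) * 1))
    with (y1 * exp y1 + (y2 - y1) * (exp y1 * exp y2)) in Hm by (field; lra).
  nra.
Qed.

Lemma cara_expm1 (rho x : R) : rho < 0 -> cara rho x = (exp (- rho * x) - 1) / - rho.
Proof. intros Hrho. unfold cara. field. lra. Qed.

Lemma cara_pos_increasing (rho c X : R) : rho < 0 -> 0 < c < X ->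
  0 < cara rho c < cara rho X.
Proof.
  intros Hrho Hc. rewrite !cara_expm1 by exact Hrho.
  pose proof (expm1_pos (- rho) c ltac:(lra) ltac:(lra)).
  assert (exp (- rho * c) < exp (- rho * X)) by (apply exp_increasing; nra).
  split; [apply Rdiv_lt_0_compat; lra|].
  unfold Rdiv. apply Rmult_lt_compat_r; [apply Rinv_0_lt_compat|]; lra.
Qed.

(* Expected fees c u(X)/u(c) under CARA utility with coefficient of risk
   love a = -rho > 0, the factor 1/a cancelling. *)
Definition fee_ratio (a c X : R) : R := c * (exp (a * X) - 1) / (exp (a * c) - 1).

Lemma fee_ratio_cara (rho c X : R) : rho < 0 -> 0 < c ->
  c * cara rho X / cara rho c = fee_ratio (- rho) c X.
Proof.
  intros Hrho Hc. unfold fee_ratio. rewrite !cara_expm1 by exact Hrho.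
  pose proof (expm1_pos (- rho) c ltac:(lra) Hc). field. lra.
Qed.

Lemma cara_fees (rho : R) (n : nat) (v s c : R) : rho < 0 -> (2 <= n)%nat -> 0 < c < v - s ->
  infinite_sum (fee_term (cara rho) n v s c) (c * cara rho (v - s) / cara rho c) /\
  revenue (cara rho) n v s c = c * cara rho (v - s) / cara rho c + s.
Proof.
  intros Hrho Hn Hc.
  exact (fees_closed_form _ n v s c Hn (cara_pos_increasing rho c (v - s) Hrho Hc)).
Qed.

Lemma revenue_cara (rho : R) (n : nat) (v s c : R) : rho < 0 -> (2 <= n)%nat -> 0 < c < v - s ->
  revenue (cara rho) n v s c = fee_ratio (- rho) c (v - s) + s.
Proof.
  intros Hrho Hn Hc. rewrite (proj2 (cara_fees rho n v s c Hrho Hn Hc)).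
  rewrite fee_ratio_cara by lra. reflexivity.
Qed.
Section FeeRatio.
Variable a : R.
Hypothesis Ha : 0 < a.

Lemma fee_ratio_gt (c X : R) : 0 < c < X -> X < fee_ratio a c X.
Proof.
  intros Hc. unfold fee_ratio. pose proof (expm1_pos a c Ha ltac:(lra)).
  pose proof (expm1_ratio_increasing (a * c) (a * X) ltac:(split; nra)).
  apply (Rmult_lt_reg_r (exp (a * c) - 1)); [lra|].
  unfold Rdiv. rewrite Rmult_assoc, Rinv_l, Rmult_1_r by lra.
  apply (Rmult_lt_reg_l a); nra.
Qed.

Lemma fee_ratio_increasing_X (c X1 X2 : R) : 0 < c -> X1 < X2 ->
  fee_ratio a c X1 < fee_ratio a c X2.
Proof.
  intros Hc HX. unfold fee_ratio. pose proof (expm1_pos a c Ha Hc).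
  assert (exp (a * X1) < exp (a * X2)) by (apply exp_increasing; nra).
  unfold Rdiv. apply Rmult_lt_compat_r; [apply Rinv_0_lt_compat; lra|].
  apply Rmult_lt_compat_l; lra.
Qed.

(* (V) in s: raising X by d raises the fees by more than d, so lowering the
   sale price by d raises the revenue. *)
Lemma fee_ratio_shift (c X d : R) : 0 < c < X -> 0 < d ->
  fee_ratio a c X + d < fee_ratio a c (X + d).
Proof.
  intros Hc Hd. unfold fee_ratio. pose proof (expm1_pos a c Ha ltac:(lra)).
  destruct (expm1_bounds (a * d) ltac:(nra)) as [Hd1 _].
  destruct (expm1_bounds (a * c) ltac:(nra)) as [_ Hc1].
  assert (exp (a * c) < exp (a * X)) by (apply exp_increasing; nra).
  assert (Hgap : d * (exp (a * c) - 1) < c * (exp (a * X) * (exp (a * d) - 1))).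
  { apply (Rmult_lt_reg_l a); [exact Ha|].
    assert (a * d * (exp (a * c) - 1) < a * d * (a * c * exp (a * c)))
      by (apply Rmult_lt_compat_l; nra).
    assert (a * c * exp (a * c) * (a * d) < a * c * exp (a * X) * (exp (a * d) - 1)).
    { pose proof (exp_pos (a * c)).
      apply Rmult_le_0_lt_compat; try nra. }
    nra. }
  replace (exp (a * (X + d))) with (exp (a * X) * exp (a * d)) by (rewrite <- exp_plus; f_equal; ring).
  apply (Rmult_lt_reg_r (exp (a * c) - 1)); [lra|].
  field_simplify; lra.
Qed.

Lemma fee_ratio_decreasing_c (c1 c2 X : R) : 0 < c1 < c2 -> 0 < X ->
  fee_ratio a c2 X < fee_ratio a c1 X.
Proof.
  intros Hc HX. unfold fee_ratio.
  pose proof (expm1_pos a c1 Ha ltac:(lra)). pose proof (expm1_pos a c2 Ha ltac:(lra)).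
  pose proof (expm1_pos a X Ha HX).
  pose proof (expm1_ratio_increasing (a * c1) (a * c2) ltac:(split; nra)).
  assert (c2 * (exp (a * c1) - 1) < c1 * (exp (a * c2) - 1)) by (apply (Rmult_lt_reg_l a); nra).
  apply (Rmult_lt_reg_r ((exp (a * c1) - 1) * (exp (a * c2) - 1))); [nra|].
  field_simplify; try lra. nra.
Qed.

Lemma fee_ratio_lt_utility (c X : R) : 0 < c -> 0 < X ->
  fee_ratio a c X < (exp (a * X) - 1) / a.
Proof.
  intros Hc HX. unfold fee_ratio.
  destruct (expm1_bounds (a * c) ltac:(nra)) as [Hc1 _]. pose proof (expm1_pos a X Ha HX).
  apply (Rmult_lt_reg_r (a * (exp (a * c) - 1))); [nra|].
  assert ((exp (a * X) - 1) * (a * c) < (exp (a * X) - 1) * (exp (a * c) - 1))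
    by (apply Rmult_lt_compat_l; lra).
  field_simplify; [nra | lra | nra].
Qed.

Lemma fee_ratio_near_utility (c X : R) : 0 < c -> 0 < X ->
  (exp (a * X) - 1) / a * (1 - a * c) < fee_ratio a c X.
Proof.
  intros Hc HX. unfold fee_ratio.
  destruct (expm1_bounds (a * c) ltac:(nra)) as [Hc1 Hc2]. pose proof (expm1_pos a X Ha HX).
  apply (Rmult_lt_reg_r (a * (exp (a * c) - 1))); [nra|].
  assert ((exp (a * X) - 1) * (exp (a * c) - 1) < (exp (a * X) - 1) * (a * c * exp (a * c)))
    by (apply Rmult_lt_compat_l; lra).
  field_simplify; [nra | nra | lra].
Qed.

(* u_a(X) + s <= u_a(X + s) for s >= 0: the sale price is worth less to
   the seller than to a risk-loving bidder. *)
Lemma utility_superadditive (X s : R) : 0 < X -> 0 <= s ->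
  (exp (a * X) - 1) / a + s <= (exp (a * (X + s)) - 1) / a.
Proof.
  intros HX Hs. pose proof (expm1_pos a X Ha HX). pose proof (exp_ineq1_le (a * s)).
  replace (exp (a * (X + s))) with (exp (a * X) * exp (a * s)) by (rewrite <- exp_plus; f_equal; ring).
  apply (Rmult_le_reg_r a); [exact Ha|]. field_simplify; [|lra|lra].
  assert (0 <= a * s) by nra. nra.
Qed.

End FeeRatio.

(* u_a(X)/u_a(c) = (e^(a X) - 1)/(e^(a c) - 1) increases with the degree of
   risk love a, since its derivative in a is positive by expm1_cross. *)
Lemma expm1_quotient_increasing (a1 a2 c X : R) : 0 < a2 < a1 -> 0 < c < X ->
  (exp (a2 * X) - 1) / (exp (a2 * c) - 1) < (exp (a1 * X) - 1) / (exp (a1 * c) - 1).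
Proof.
  intros Ha Hc.
  set (F := fun a => (exp (a * X) - 1) / (exp (a * c) - 1)).
  set (dF := fun a => (X * exp (a * X) * (exp (a * c) - 1) - c * exp (a * c) * (exp (a * X) - 1))
                       / (exp (a * c) - 1) ^ 2).
  assert (HdF : forall a, 0 < a -> is_derive F a (dF a)).
  { intros a Hpos. pose proof (expm1_pos a c Hpos ltac:(lra)).
    unfold F, dF. auto_derive; [lra | field; lra]. }
  assert (HdF_pos : forall a, 0 < a -> 0 < dF a).
  { intros a Hpos. pose proof (expm1_pos a c Hpos ltac:(lra)).
    pose proof (expm1_cross (a * c) (a * X) ltac:(split; nra)).
    unfold dF. apply Rdiv_lt_0_compat; [|apply pow_lt; lra].
    apply (Rmult_lt_reg_l a); nra. }
  apply (incr_function F (Finite 0) p_infty dF); simpl; try lra.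
  - intros x Hx _. exact (HdF x Hx).
  - intros x Hx _. exact (HdF_pos x Hx).
Qed.

Lemma fee_ratio_increasing_a (a1 a2 c X : R) : 0 < a2 < a1 -> 0 < c < X ->
  fee_ratio a2 c X < fee_ratio a1 c X.
Proof.
  intros Ha Hc. unfold fee_ratio, Rdiv. rewrite !Rmult_assoc.
  apply Rmult_lt_compat_l; [lra|]. exact (expm1_quotient_increasing a1 a2 c X Ha Hc).
Qed.

(* (VI): over s >= 0 and 0 < c < v - s the revenue has supremum u(v), which
   is approached with s = 0 and c -> 0. *)
Lemma revenue_sup (rho : R) (n : nat) (v : R) : rho < 0 -> (2 <= n)%nat -> 0 < v ->
  is_lub (fun r => exists s c, 0 <= s /\ 0 < c /\ c < v - s /\ r = revenue (cara rho) n v s c)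
         (cara rho v).
Proof.
  intros Hrho Hn Hv. rewrite cara_expm1 by exact Hrho.
  set (a := - rho). assert (Ha : 0 < a) by (unfold a; lra).
  set (U := (exp (a * v) - 1) / a).
  split.
  - intros r [s [c [Hs [Hc [Hcv ->]]]]].
    rewrite revenue_cara by (auto; lra). fold a.
    pose proof (fee_ratio_lt_utility a Ha c (v - s) Hc ltac:(lra)).
    pose proof (utility_superadditive a Ha (v - s) s ltac:(lra) Hs) as Hsup.
    replace (v - s + s) with v in Hsup by ring. fold U in Hsup. lra.
  - intros b Hb. destruct (Rle_or_lt U b) as [Hle | Hlt]; [exact Hle|]. exfalso.
    assert (HU : 0 < U) by (unfold U; pose proof (expm1_pos a v Ha Hv); apply Rdiv_lt_0_compat; lra).
    set (c := Rmin (v / 2) ((U - b) / (2 * a * U))).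
    assert (Hc0 : 0 < c).
    { apply Rmin_glb_lt; [lra|]. apply Rdiv_lt_0_compat; [lra|]. nra. }
    assert (Hcv : c < v) by (unfold c; pose proof (Rmin_l (v / 2) ((U - b) / (2 * a * U))); lra).
    assert (Hac : a * c * U <= (U - b) / 2).
    { pose proof (Rmin_r (v / 2) ((U - b) / (2 * a * U))) as Hc2. fold c in Hc2.
      apply (Rmult_le_compat_l (2 * a * U)) in Hc2; [|nra].
      replace (2 * a * U * ((U - b) / (2 * a * U))) with (U - b) in Hc2 by (field; lra). nra. }
    assert (Hin : revenue (cara rho) n v 0 c <= b) by (apply Hb; exists 0, c; repeat split; lra).
    rewrite revenue_cara, Rminus_0_r, Rplus_0_r in Hin by (auto; lra). fold a in Hin.
    pose proof (fee_ratio_near_utility a Ha c v Hc0 Hv) as Hnear. fold U in Hnear. nra.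
Qed.

Theorem theorem3 :
  (* (I) risk neutral *)
  (forall (n : nat) (v s c : R), (2 <= n)%nat -> 0 < v -> 0 <= s -> 0 < c -> c < v - s ->
     revenue u_neutral n v s c = v)
  /\
  (forall rho : R, rho < 0 ->
     (* (II) closed form (and convergence of the expected-fee series) *)
     (forall (n : nat) (v s c : R), (2 <= n)%nat -> 0 < v -> 0 <= s -> 0 < c -> c < v - s ->
        infinite_sum (fee_term (cara rho) n v s c) (c * cara rho (v - s) / cara rho c)
        /\ revenue (cara rho) n v s c = c * cara rho (v - s) / cara rho c + s)
     /\
     (* (III) independence of n *)
     (forall (n m : nat) (v s c : R), (2 <= n)%nat -> (2 <= m)%nat ->
        0 < v -> 0 <= s -> 0 < c -> c < v - s ->
        revenue (cara rho) n v s c = revenue (cara rho) m v s c)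
     /\
     (* (IV) exceeds v *)
     (forall (n : nat) (v s c : R), (2 <= n)%nat -> 0 < v -> 0 <= s -> 0 < c -> c < v - s ->
        v < revenue (cara rho) n v s c)
     /\
     (* (V) strictly increasing in v *)
     (forall (n : nat) (v1 v2 s c : R), (2 <= n)%nat -> 0 < v1 -> v1 < v2 ->
        0 <= s -> 0 < c -> c < v1 - s ->
        revenue (cara rho) n v1 s c < revenue (cara rho) n v2 s c)
     /\
     (* (V) decreasing in s *)
     (forall (n : nat) (v s1 s2 c : R), (2 <= n)%nat -> 0 < v ->
        0 <= s1 -> s1 < s2 -> 0 < c -> c < v - s2 ->
        revenue (cara rho) n v s2 c < revenue (cara rho) n v s1 c)
     /\
     (* (V) decreasing in c *)
     (forall (n : nat) (v s c1 c2 : R), (2 <= n)%nat -> 0 < v ->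
        0 <= s -> 0 < c1 -> c1 < c2 -> c2 < v - s ->
        revenue (cara rho) n v s c2 < revenue (cara rho) n v s c1)
     /\
     (* (VI) supremum over s >= 0 and 0 < c < v - s equals u(v) *)
     (forall (n : nat) (v : R), (2 <= n)%nat -> 0 < v ->
        is_lub (fun r => exists s c, 0 <= s /\ 0 < c /\ c < v - s /\
                                     r = revenue (cara rho) n v s c)
               (cara rho v)))
  /\
  (* (V) decreasing in rho (more risk-loving => larger revenue) *)
  (forall (rho1 rho2 : R) (n : nat) (v s c : R), rho1 < rho2 -> rho2 < 0 ->
     (2 <= n)%nat -> 0 < v -> 0 <= s -> 0 < c -> c < v - s ->
     revenue (cara rho2) n v s c < revenue (cara rho1) n v s c).
Proof.
  split; [|split].
  -
    intros n v s c Hn _ _ Hc Hcv.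
    rewrite (proj2 (fees_closed_form u_neutral n v s c Hn ltac:(unfold u_neutral; lra))).
    unfold u_neutral. field. lra.
  - intros rho Hrho. assert (Ha : 0 < - rho) by lra.
    split; [|split; [|split; [|split; [|split; [|split]]]]].
    + intros n v s c Hn _ _ Hc Hcv. exact (cara_fees rho n v s c Hrho Hn (conj Hc Hcv)).
    + intros n m v s c Hn Hm _ _ Hc Hcv. rewrite !revenue_cara by auto. reflexivity.
    + intros n v s c Hn _ _ Hc Hcv. rewrite revenue_cara by auto.
      pose proof (fee_ratio_gt (- rho) Ha c (v - s) (conj Hc Hcv)). lra.
    + intros n v1 v2 s c Hn _ Hv12 _ Hc Hcv. rewrite !revenue_cara by (auto; lra).
      pose proof (fee_ratio_increasing_X (- rho) Ha c (v1 - s) (v2 - s) Hc ltac:(lra)). lra.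
    + intros n v s1 s2 c Hn _ _ Hs12 Hc Hcv. rewrite !revenue_cara by (auto; lra).
      pose proof (fee_ratio_shift (- rho) Ha c (v - s2) (s2 - s1) (conj Hc Hcv) ltac:(lra)) as Hshift.
      replace (v - s2 + (s2 - s1)) with (v - s1) in Hshift by ring. lra.
    + intros n v s c1 c2 Hn _ _ Hc1 Hc12 Hc2. rewrite !revenue_cara by (auto; lra).
      pose proof (fee_ratio_decreasing_c (- rho) Ha c1 c2 (v - s) (conj Hc1 Hc12) ltac:(lra)). lra.
    + intros n v Hn Hv. exact (revenue_sup rho n v Hrho Hn Hv).
  - intros rho1 rho2 n v s c H12 Hrho2 Hn _ _ Hc Hcv. rewrite !revenue_cara by (auto; lra).
    pose proof (fee_ratio_increasing_a (- rho1) (- rho2) c (v - s) ltac:(lra) (conj Hc Hcv)). lra.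
Qed.
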